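(* Let $\mathbf{X},\mathbf{Y},\mathbf{Z}$ be Banach spaces, and let $\mathcal{S}_{\mathbf{X}}\subset\mathbf{X}$, $\mathcal{S}_{\mathbf{Y}}\subset\mathbf{Y}$, $\mathcal{S}\subset\mathbf{Z}$. Assume that 1. $s^\ast_{\mathbf{X}}(\mathcal{S}_{\mathbf{X}})=s^\ast_{\mathbf{Y}}(\mathcal{S}_{\mathbf{Y}})$; 2. there exists a Lipschitz continuous map $\Phi:\mathcal{S}_{\mathbf{X}}\to\mathbf{Z}$ with $\Phi(\mathcal{S}_{\mathbf{X}})\supset\mathcal{S}$; 3. there exists a Borel probability measure $\mathbb{P}$ on $\mathcal{S}_{\mathbf{Y}}$ that is critical for $\mathcal{S}_{\mathbf{Y}}$ with respect to $\mathbf{Y}$; 4. there exists a measurable map $\Psi:\mathcal{S}_{\mathbf{Y}}\to\mathcal{S}$ and $\kappa>0$ with $\|\Psi(\mathbf{x})-\Psi(\mathbf{x}')\|_{\mathbf{Z}}\ge\kappa\|\mathbf{x}-\mathbf{x}'\|_{\mathbf{Y}}$ for all $\mathbf{x},\mathbf{x}'\in\mathcal{S}_{\mathbf{Y}}$. Then $s^\ast_{\mathbf{Z}}(\mathcal{S})=s^\ast_{\mathbf{X}}(\mathcal{S}_{\mathbf{X}})$, and the push-forward measure $\mathbb{P}\circ\Psi^{-1}$ is a Borel probability measure on $\mathcal{S}$ that is critical for $\mathcal{S}$ with respect to $\mathbf{Z}$.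
   Context: For a real Banach space $\mathbf{X}$ and $\mathcal{S}\subset\mathbf{X}$: a codec is a sequence $((E_R,D_R))_{R\in\mathbb{N}}$ of maps $E_R:\mathcal{S}\to\{0,1\}^R$, $D_R:\{0,1\}^R\to\mathbf{X}$; distortion $\delta_{\mathcal{S},\mathbf{X}}(E_R,D_R)=\sup_{\mathbf{x}\in\mathcal{S}}\|\mathbf{x}-D_R(E_R(\mathbf{x}))\|_{\mathbf{X}}$; optimal compression rate $s^\ast_{\mathbf{X}}(\mathcal{S})=\sup\{s\ge0:\exists\text{ codec with }\sup_RR^s\delta_{\mathcal{S},\mathbf{X}}(E_R,D_R)<\infty\}$. Subsets are equipped with the trace of the Borel $\sigma$-algebra of the ambient space (this also defines measurability of $\Psi$). A Borel probability measure $\mathbb{P}$ on $\mathcal{S}$ has (logarithmic) growth order $s_0\in[0,\infty)$ w.r.t. $\mathbf{X}$ if for every $s>s_0$ there exist $\varepsilon_0,c>0$ with $\mathbb{P}(\mathcal{S}\cap\mathcal{B}(\mathbf{x},\varepsilon;\mathbf{X}))\le2^{-c\varepsilon^{-1/s}}$ for all $\mathbf{x}\in\mathbf{X}$, $\varepsilon\in(0,\varepsilon_0)$ (closed balls); it is critical for $\mathcal{S}$ w.r.t. $\mathbf{X}$ if it has growth order $s^\ast_{\mathbf{X}}(\mathcal{S})$. *)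

From HB Require Import structures.
From mathcomp Require Import all_boot all_order all_algebra.
From mathcomp Require Import all_classical all_reals all_analysis.
Set Implicit Arguments. Unset Strict Implicit. Unset Printing Implicit Defensive.
Import Order.TTheory GRing.Theory Num.Theory.
Import numFieldNormedType.Exports.
Local Open Scope classical_set_scope.
Local Open Scope ring_scope.

Section Defs.
Variable R : realType.

Definition sub (X : normedModType R) (S : set X) := {x : X | S x}.

(* Trace on S of the Borel sigma-algebra of X: generated by traces of open
   sets (this equals { B ∩ S | B Borel }). *)
Definition trace_borel (X : normedModType R) (S : set X) : set (set (sub S)) :=
  <<s [set (@proj1_sig X S) @^-1` U | U in [set U : set X | open U]] >>.
Arguments trace_borel {X} S _.

Definition borel_probability (X : normedModType R) (S : set X)
    (P : set (sub S) -> \bar R) : Prop :=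
  [/\ forall A, trace_borel S A -> (0 <= P A)%E,
      P setT = 1%E &
      forall F : nat -> set (sub S),
        (forall n, trace_borel S (F n)) -> trivIset setT F ->
        (fun n => \sum_(0 <= i < n) P (F i))%E @ \oo --> P (\bigcup_n F n)].

Definition trace_measurable (X Y : normedModType R) (SX : set X) (SY : set Y)
    (f : sub SX -> sub SY) : Prop :=
  forall B, trace_borel SY B -> trace_borel SX (f @^-1` B).

Definition distortion (X : normedModType R) (S : set X) (n : nat)
    (E : sub S -> n.-tuple bool) (D : n.-tuple bool -> X) : \bar R :=
  ereal_sup [set (`| proj1_sig x - D (E x) |)%:E | x in [set: sub S]].

Definition admissible_rate (X : normedModType R) (S : set X) (s : R) : Prop :=
  0 <= s /\
  exists (E : forall n : nat, sub S -> n.-tuple bool)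
         (D : forall n : nat, n.-tuple bool -> X),
    (ereal_sup (range (fun n : nat =>
        ((n%:R `^ s)%R%:E * distortion (E n) (D n))%E)) < +oo)%E.

Definition opt_rate (X : normedModType R) (S : set X) : \bar R :=
  ereal_sup [set s%:E | s in [set s | admissible_rate S s]].

Definition growth_order (X : normedModType R) (S : set X)
    (P : set (sub S) -> \bar R) (s0 : R) : Prop :=
  0 <= s0 /\
  forall s, s0 < s ->
    exists eps0 c : R, 0 < eps0 /\ 0 < c /\
      forall (x : X) (eps : R), 0 < eps -> eps < eps0 ->
        (P [set y : sub S | (`| proj1_sig y - x | <= eps)%R]
           <= (2 `^ (- (c * eps `^ (- s^-1))))%R%:E)%E.

Definition critical (X : normedModType R) (S : set X)
    (P : set (sub S) -> \bar R) : Prop :=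
  exists s0 : R, opt_rate S = s0%:E /\ growth_order P s0.

End Defs.

From HB Require Import structures.
From mathcomp Require Import all_boot all_order all_algebra.
From mathcomp Require Import all_classical all_reals all_analysis.
From mathcomp Require Import lra.
Import Order.TTheory GRing.Theory Num.Theory.
Import numFieldNormedType.Exports.
Local Open Scope classical_set_scope.
Local Open Scope ring_scope.

(* A Lipschitz map onto S transports codecs: encode a point of S through a
   preimage under Phi and decode by applying Phi, so every rate admissible for
   S_X is admissible for S.  Conversely, an n-bit codec of rate s covers S by
   2^n balls of radius K n^-s; under a probability of growth order s0 < s each
   such ball has mass at most 2^(-c' n^(s/s')) with s0 < s' < s, and 2^n of
   these masses cannot add up to 1 for large n.  So s*(S) is bounded by the
   growth order of any Borel probability on S.  Since Psi expands distances by
   kappa, the preimage of an eps-ball lies in a (2 eps / kappa)-ball, and the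
   push-forward of P keeps the growth order s*(S_Y) = s*(S_X). *)

Lemma near_powR_nat_gt (R : realType) (A p : R) : 0 < p ->
  \forall n \near \oo, A < n%:R `^ p.
Proof.
move=> p_gt0; pose A' := Num.max A 0; pose B := A' `^ p^-1.
have A_le : A <= A' by rewrite le_max lexx.
have A'_ge0 : 0 <= A' by rewrite le_max lexx orbT.
exists (Num.truncn B).+1 => // n /=; rewrite -(ler_nat R) => Bn.
have B_lt_n : B < n%:R := lt_le_trans (truncnS_gt B) Bn.
have : B `^ p < n%:R `^ p by apply: gt0_ltr_powR; rewrite // nnegrE ?powR_ge0.
rewrite /B -powRrM mulVf ?lt0r_neq0 // powRr1 //; exact: le_lt_trans.
Qed.

Lemma powR2_ge1_le (R : realType) (n : nat) (y : R) :
  1 <= 2 `^ (- y) *+ 2 ^ n -> y <= n%:R.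
Proof.
rewrite -mulr_natr natrX -powR_mulrn // -powRD ?pnatr_eq0 ?implybT //.
move=> /ln_ge0; rewrite ln_powR pmulr_lge0 ?ln_gt0 ?ltr1n //.
by rewrite addrC subr_ge0.
Qed.

Section TraceBorel.
Context {R : realType} {X : normedModType R} {S : set X}.
Local Notation TB := (@trace_borel R X S).

Lemma trace_borel0 : TB set0.
Proof. exact: sigma_algebra0. Qed.

Lemma trace_borelC A : TB A -> TB (~` A).
Proof. by rewrite -setTD; exact: sigma_algebraCD. Qed.

Lemma trace_borelT : TB setT.
Proof. by rewrite -setC0; apply: trace_borelC; exact: trace_borel0. Qed.

Lemma trace_borelU A B : TB A -> TB B -> TB (A `|` B).
Proof.
move=> TBA TBB; rewrite -bigcup2E; apply: sigma_algebra_bigcup => -[|[|n]] //=.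
exact: trace_borel0.
Qed.

Lemma trace_borelD A B : TB A -> TB B -> TB (A `\` B).
Proof.
move=> TBA TBB; rewrite setDE -[A]setCK -setCU.
by apply: trace_borelC; apply: trace_borelU => //; exact: trace_borelC.
Qed.

Lemma trace_borel_bigsetU {I : Type} (r : seq I) (F : I -> set (sub S)) :
  (forall i, TB (F i)) -> TB (\big[setU/set0]_(i <- r) F i).
Proof.
move=> TBF; elim: r => [|i r IHr]; first by rewrite big_nil; exact: trace_borel0.
by rewrite big_cons; apply: trace_borelU.
Qed.

Lemma trace_borel_closed_ball (x : X) (e : R) :
  TB [set y : sub S | `|proj1_sig y - x| <= e].
Proof.
have -> : [set y : sub S | `|proj1_sig y - x| <= e] =
    ~` (@proj1_sig X S @^-1` [set y : X | e < `|y - x|]).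
  by apply/seteqP; split => y /=; rewrite leNgt => /negP.
apply: trace_borelC; apply: sub_sigma_algebra.
exists [set y : X | e < `|y - x|] => //.
have -> : [set y : X | e < `|y - x|] =
    (fun y => `|y - x|) @^-1` [set r | e < r] by [].
apply: open_comp; last exact: open_gt.
move=> y _; apply: (@continuous_comp _ _ _ (fun y => y - x) (@Num.norm _ X)).
  by apply: cvgB; [exact: cvg_id | exact: cvg_cst].
exact: norm_continuous.
Qed.

End TraceBorel.

Section BorelProbability.
Context {R : realType} {X : normedModType R} {S : set X}.
Context {P : set (sub S) -> \bar R}.
Hypothesis P_prob : borel_probability P.
Local Notation TB := (@trace_borel R X S).

Lemma bprob_ge0 A : TB A -> (0 <= P A)%E.
Proof. by case: P_prob => P_ge0 _ _; exact: P_ge0. Qed.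

Lemma bprob_setT : P setT = 1%E.
Proof. by case: P_prob. Qed.

Lemma bprob_bigcup2 A B : TB A -> TB B -> A `&` B = set0 ->
  (fun n => \sum_(0 <= i < n) P (bigcup2 A B i))%E @ \oo --> P (A `|` B).
Proof.
move=> TBA TBB AB0; case: P_prob => _ _ P_sigma; rewrite -bigcup2E.
apply: P_sigma; last by rewrite -trivIset_bigcup2.
by move=> [|[|i]] /=; [exact: TBA | exact: TBB | exact: trace_borel0].
Qed.

Lemma bprob_set0 : P set0 = 0%E.
Proof.
have TB0 := @trace_borel0 _ _ S; have TBT := @trace_borelT _ _ S.
have := @nneseries_lim_ge _ (fun i => P (bigcup2 setT set0 i)) xpredT 0 2.
rewrite (cvg_lim _ (bprob_bigcup2 _ _ TBT TB0 (setI0 _))) // setU0.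
rewrite big_mkord !big_ord_recr big_ord0 /= add0e bprob_setT => le1.
have : (1 + P set0 <= 1 + 0)%E.
  by rewrite adde0; apply: le1 => -[|[|i]] _ _; apply: bprob_ge0.
by rewrite leeD2lE // => le0; apply/eqP; rewrite eq_le le0 bprob_ge0.
Qed.

Lemma bprob_setU A B : TB A -> TB B -> A `&` B = set0 ->
  P (A `|` B) = (P A + P B)%E.
Proof.
move=> TBA TBB AB0; rewrite -(cvg_lim _ (bprob_bigcup2 _ _ TBA TBB AB0)) //.
apply: cvg_lim => //; apply: cvg_near_cst; exists 2%N => // -[|[|n]] // _.
rewrite big_ltn // big_ltn //= big_nat_cond big1 ?adde0 // => -[|[|i]] //= _.
exact: bprob_set0.
Qed.

Lemma bprob_le A B : TB A -> TB B -> A `<=` B -> (P A <= P B)%E.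
Proof.
move=> TBA TBB AB; have TBBA : TB (B `\` A) by exact: trace_borelD.
rewrite -(setDUK AB) bprob_setU ?setDIK //.
by rewrite leeDl // bprob_ge0.
Qed.

Lemma bprob_setU_le A B : TB A -> TB B -> (P (A `|` B) <= P A + P B)%E.
Proof.
move=> TBA TBB; have TBAB : TB (A `|` B) by exact: trace_borelU.
have TBD : TB ((A `|` B) `\` A) by exact: trace_borelD.
rewrite -{1}(setDUK (@subsetUl _ A B)) bprob_setU ?setDIK //.
by apply: leeD2l; apply: bprob_le => // x [[]].
Qed.

Lemma bprob_bigsetU_le {I : Type} (r : seq I) (F : I -> set (sub S)) :
  (forall i, TB (F i)) ->
  (P (\big[setU/set0]_(i <- r) F i) <= \sum_(i <- r) P (F i))%E.
Proof.
move=> TBF; elim: r => [|i r IHr]; first by rewrite !big_nil bprob_set0.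
rewrite !big_cons; apply: le_trans (bprob_setU_le _ _ (TBF i) _) _.
  exact: trace_borel_bigsetU.
exact: leeD2l.
Qed.

Lemma bprob_cover_ge1 {I : finType} (c : I -> X) (e : R) :
  (forall x : sub S, exists i, `|proj1_sig x - c i| <= e) ->
  (1 <= \sum_i P [set y : sub S | (`|proj1_sig y - c i| <= e)%R])%E.
Proof.
move=> cover; rewrite -bprob_setT.
pose B i := [set y : sub S | `|proj1_sig y - c i| <= e].
have TBB i : TB (B i) by exact: trace_borel_closed_ball.
apply: le_trans (bprob_bigsetU_le (index_enum I) B TBB).
apply: bprob_le; [exact: trace_borelT | exact: trace_borel_bigsetU | ].
move=> x _; have [i xi] := cover x.
by rewrite -bigcup_seq; exists i => //=; rewrite mem_index_enum.
Qed.

Lemma bprob_cover_exp2_le {n : nat} (c : n.-tuple bool -> X) (e b : R) :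
  (forall x : sub S, exists i, `|proj1_sig x - c i| <= e) ->
  (forall i, (P [set y : sub S | (`|proj1_sig y - c i| <= e)%R]
                <= (2 `^ (- b))%:E)%E) ->
  b <= n%:R.
Proof.
move=> cover small_balls; apply: powR2_ge1_le; rewrite -lee_fin.
apply: le_trans (bprob_cover_ge1 c e cover) _.
have := @lee_sum _ _ _ _ (index_enum (n.-tuple bool)) xpredT
  (fun i _ => small_balls i).
by move/le_trans; apply; rewrite sumEFin sumr_const card_tuple card_bool.
Qed.

End BorelProbability.

Lemma admissible_rateP (R : realType) (X : normedModType R) (S : set X) (s : R) :
  admissible_rate S s <->
  0 <= s /\ exists (E : forall n : nat, sub S -> n.-tuple bool)
                   (D : forall n : nat, n.-tuple bool -> X) (K : R),
    0 < K /\ forall n x, 0 < n%:R `^ s ->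
      `|proj1_sig x - D n (E n x)| <= K / n%:R `^ s.
Proof.
split=> -[s_ge0 [E [D ED_rate]]]; split=> //; exists E, D.
- move: ED_rate; set sup := ereal_sup _ => sup_lty.
  have sup_ub n : ((n%:R `^ s)%:E * distortion (E n) (D n) <= sup)%E.
    by apply: ereal_sup_ubound; exists n.
  have [K [K_gt0 K_ub]] : exists K : R, 0 < K /\ (sup <= K%:E)%E.
    case: sup sup_lty {sup_ub} => [r| |] // _; last by exists 1; rewrite leNye.
    exists (`|r| + 1).
    by rewrite ltr_pwDr // lee_fin (le_trans (ler_norm r)) ?lerDl.
  exists K; split=> // n x ns_gt0; rewrite ler_pdivlMr // mulrC -lee_fin EFinM.
  apply: le_trans (le_trans (sup_ub n) K_ub).
  apply: lee_wpmul2l; first by rewrite lee_fin ltW.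
  by apply: ereal_sup_ubound; exists x.
- move: ED_rate => [K [K_gt0 ED_bound]].
  apply: (@le_lt_trans _ _ K%:E); last exact: ltry.
  apply: ge_ereal_sup => _ [n _ <-].
  have [->|ns_neq0] := eqVneq (n%:R `^ s) 0; first by rewrite mul0e lee_fin ltW.
  have ns_gt0 : 0 < n%:R `^ s by rewrite lt0r ns_neq0 powR_ge0.
  apply: (@le_trans _ _ ((n%:R `^ s)%:E * (K / n%:R `^ s)%:E)%E).
    apply: lee_wpmul2l; first by rewrite lee_fin ltW.
    by apply: ge_ereal_sup => _ [x _ <-]; rewrite lee_fin; exact: ED_bound.
  by rewrite -EFinM mulrC divfK.
Qed.

Lemma admissible_rate_lipschitz_image (R : realType) (X Z : normedModType R)
    (SX : set X) (S : set Z) (Phi : sub SX -> Z) (L : R) :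
  (forall x x' : sub SX,
     `|Phi x - Phi x'| <= L * `|proj1_sig x - proj1_sig x'|) ->
  (forall z, S z -> exists x, Phi x = z) ->
  forall s, admissible_rate SX s -> admissible_rate S s.
Proof.
move=> Phi_lip Phi_onto s /admissible_rateP[s_ge0 [E [D [K [K_gt0 ED_bound]]]]].
apply/admissible_rateP; split=> //.
have pre (z : sub S) : {x : sub SX | Phi x = proj1_sig z}.
  exact: cid (Phi_onto _ (proj2_sig z)).
pose E' n z := E n (proj1_sig (pre z)).
pose D' n (c : n.-tuple bool) : Z :=
  if pselect (exists x, E n x = c) is left ex then Phi (proj1_sig (cid ex))
  else 0.
have L_le : L <= `|L| + 1 by rewrite (le_trans (ler_norm L)) ?lerDl.
have L1_gt0 : 0 < `|L| + 1 by rewrite ltr_pwDr.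
exists E', D', ((`|L| + 1) * (K + K)); split.
  by apply: mulr_gt0 => //; rewrite addr_gt0.
move=> n z ns_gt0; rewrite /E' /D'; set x := proj1_sig (pre z).
case: pselect => [ex|]; last by case; exists x.
set x' := proj1_sig (cid ex); have Ex' : E n x' = E n x := proj2_sig (cid ex).
have xx' : `|proj1_sig x - proj1_sig x'| <= (K + K) / n%:R `^ s.
  rewrite mulrDl (le_trans (ler_distD (D n (E n x)) _ _)) // lerD ?ED_bound //.
  by rewrite distrC -Ex' ED_bound.
rewrite -(proj2_sig (pre z)) -/x -mulrA.
apply: le_trans (Phi_lip x x') (le_trans (ler_wpM2r (normr_ge0 _) L_le) _).
by rewrite ler_pM2l.
Qed.

Lemma opt_rate_lipschitz_image (R : realType) (X Z : normedModType R)
    (SX : set X) (S : set Z) (Phi : sub SX -> Z) (L : R) :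
  (forall x x' : sub SX,
     `|Phi x - Phi x'| <= L * `|proj1_sig x - proj1_sig x'|) ->
  (forall z, S z -> exists x, Phi x = z) ->
  (opt_rate SX <= opt_rate S)%E.
Proof.
move=> Phi_lip Phi_onto; apply: ereal_sup_le => _ [s SXs <-]; exists s => //.
exact: admissible_rate_lipschitz_image Phi_lip Phi_onto s SXs.
Qed.

Lemma growth_order_admissible_rate (R : realType) (X : normedModType R)
    (S : set X) (P : set (sub S) -> \bar R) (s0 s : R) :
  borel_probability P -> growth_order P s0 -> admissible_rate S s -> s <= s0.
Proof.
move=> P_prob [s0_ge0 P_growth] /admissible_rateP[_ [E [D [K [K_gt0 ED_bound]]]]].
rewrite leNgt; apply/negP => s0_lt_s.
pose s' := (s0 + s) / 2; pose t := s'^-1.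
have s0_lt_s' : s0 < s' by rewrite /s'; lra.
have s'_gt0 : 0 < s' by lra.
have s_gt0 : 0 < s by lra.
have st_gt1 : 1 < s * t by rewrite ltr_pdivlMr // mul1r /s'; lra.
have [eps0 [c [eps0_gt0 [c_gt0 small_balls]]]] := P_growth s' s0_lt_s'.
pose eps (n : nat) := K * n%:R `^ (- s).
have net_bound n : (0 < n)%N -> eps n < eps0 -> c * eps n `^ (- t) <= n%:R.
  move=> n_gt0 eps_lt.
  have eps_gt0 : 0 < eps n by rewrite mulr_gt0 // powR_gt0 // ltr0n.
  apply: (bprob_cover_exp2_le P_prob (D n) (eps n)) => [x|b].
    by exists (E n x); rewrite /eps powRN ED_bound // powR_gt0 // ltr0n.
  exact: small_balls.
pose a := c * K `^ (- t).
have a_gt0 : 0 < a by rewrite mulr_gt0 // powR_gt0.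
have large_n : \forall n \near \oo,
    [/\ (0 < n)%N, eps n < eps0 & n%:R < c * eps n `^ (- t)].
  near=> n.
  have n_gt0 : (0 < n)%N by near: n; exists 1%N.
  have n_gt0' : 0 < n%:R :> R by rewrite ltr0n.
  split=> //.
  - have : K / eps0 < n%:R `^ s by near: n; exact: near_powR_nat_gt.
    by rewrite /eps powRN ltr_pdivrMr // mulrC -ltr_pdivrMr ?powR_gt0.
  - have : a^-1 < n%:R `^ (s * t - 1).
      by near: n; apply: near_powR_nat_gt; rewrite subr_gt0.
    rewrite -[a^-1]mulr1 ltr_pdivrMl // => gt1.
    rewrite /eps powRM ?powR_ge0 ?(ltW K_gt0) // -powRrM mulrNN mulrA -/a.
    rewrite -(mulr_powRB1 (ltW n_gt0')) ?(lt_trans ltr01) // mulrCA.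
    by rewrite ltr_pMr.
have [n [n_gt0 eps_lt n_lt]] := filter_ex large_n.
by have := net_bound n n_gt0 eps_lt; rewrite leNgt n_lt.
Unshelve. all: by end_near.
Qed.

Lemma opt_rate_le_growth_order (R : realType) (X : normedModType R)
    (S : set X) (P : set (sub S) -> \bar R) (s0 : R) :
  borel_probability P -> growth_order P s0 -> (opt_rate S <= s0%:E)%E.
Proof.
move=> P_prob P_growth; apply: ge_ereal_sup => _ [s Ss <-].
by rewrite lee_fin; exact: growth_order_admissible_rate P_prob P_growth Ss.
Qed.

Section Pushforward.
Context {R : realType} {Y Z : normedModType R} {SY : set Y} {S : set Z}.
Context {P : set (sub SY) -> \bar R} (P_prob : borel_probability P).
Context {Psi : sub SY -> sub S} (Psi_meas : trace_measurable Psi).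

Lemma bprob_pushforward : borel_probability (fun A => P (Psi @^-1` A)).
Proof.
case: P_prob => P_ge0 P_setT P_sigma; split=> [A TBA||F TBF F_triv].
- by apply: P_ge0; exact: Psi_meas.
- by rewrite preimage_setT.
- rewrite preimage_bigcup; apply: P_sigma => [n|i j _ _ [y [Fi Fj]]].
    exact: Psi_meas.
  by apply: F_triv => //; exists (Psi y).
Qed.

Lemma growth_order_pushforward {kappa s0 : R} : 0 < kappa ->
  (forall y y' : sub SY, kappa * `|proj1_sig y - proj1_sig y'|
     <= `|proj1_sig (Psi y) - proj1_sig (Psi y')|) ->
  growth_order P s0 -> growth_order (fun A => P (Psi @^-1` A)) s0.
Proof.
move=> kappa_gt0 Psi_expand [s0_ge0 P_growth]; split=> // s s0_lt_s.
have [eps0 [c [eps0_gt0 [c_gt0 small_balls]]]] := P_growth s s0_lt_s.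
pose r := 2 / kappa; have r_gt0 : 0 < r by rewrite divr_gt0.
exists (eps0 / r), (c * r `^ (- s^-1)).
split; [by rewrite divr_gt0 | split; first by rewrite mulr_gt0 // powR_gt0].
move=> z eps eps_gt0 eps_lt; rewrite ltr_pdivlMr // mulrC in eps_lt.
set A := Psi @^-1` _.
have TBA : @trace_borel R Y SY A := Psi_meas _ (trace_borel_closed_ball _ _).
have [->|/set0P[y0 Ay0]] := eqVneq A set0.
  by rewrite bprob_set0 // lee_fin powR_ge0.
have A_sub : A `<=` [set y | `|proj1_sig y - proj1_sig y0| <= r * eps].
  move=> y Ay; rewrite /= -(ler_pM2l kappa_gt0) mulrA /r mulrCA.
  rewrite mulfV ?lt0r_neq0 // mulr1 mulr_natl mulr2n.
  apply: le_trans (Psi_expand y y0) _.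
  by apply: le_trans (ler_distD z _ _) _; rewrite lerD // distrC.
apply: le_trans (bprob_le P_prob _ _ TBA (trace_borel_closed_ball _ _) A_sub) _.
apply: le_trans (small_balls _ _ (mulr_gt0 r_gt0 eps_gt0) eps_lt) _.
by rewrite lee_fin powRM ?mulrA // ltW.
Qed.

End Pushforward.

Theorem theorem2p6 (R : realType) (X Y Z : completeNormedModType R)
  (SX : set X) (SY : set Y) (S : set Z)
  (h1 : opt_rate SX = opt_rate SY)
  (h2 : exists Phi : sub SX -> Z,
          (exists L : R, forall x x' : sub SX,
             `| Phi x - Phi x' | <= L * `| proj1_sig x - proj1_sig x' |) /\
          (forall z : Z, S z -> exists x : sub SX, Phi x = z))
  (P : set (sub SY) -> \bar R)
  (hP : borel_probability P) (hPc : critical P)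
  (Psi : sub SY -> sub S) (hPsi : trace_measurable Psi)
  (kappa : R) (hkappa : 0 < kappa)
  (hPsi_low : forall x x' : sub SY,
     kappa * `| proj1_sig x - proj1_sig x' |
       <= `| proj1_sig (Psi x) - proj1_sig (Psi x') |) :
  opt_rate S = opt_rate SX /\
  borel_probability (fun A : set (sub S) => P (Psi @^-1` A)) /\
  critical (fun A : set (sub S) => P (Psi @^-1` A)).
Proof.
have [Phi [[L Phi_lip] Phi_onto]] := h2.
have [s0 [rateY growth_P]] := hPc.
have Q_prob := bprob_pushforward hP hPsi.
have growth_Q := growth_order_pushforward hP hPsi hkappa hPsi_low growth_P.
have rate_S : opt_rate S = s0%:E.
  apply/le_anti/andP; split.
    exact: opt_rate_le_growth_order Q_prob growth_Q.
  by rewrite -rateY -h1; exact: opt_rate_lipschitz_image Phi_lip Phi_onto.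
by rewrite rate_S h1 rateY; split=> //; split=> //; exists s0.
Qed.
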